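(* Let $G$ be a star-like block graph on $n$ vertices with blocks $B_1,\dots,B_t$ of orders $b_1,\dots,b_t$, and let $k$ be an integer with $2\le k\le n$. Then $$SW_k(G)=(n-1)\binom{n-1}{k-1}-\sum_{i=1}^t\binom{b_i-1}{k}.$$
   Context: A block graph is a connected graph in which every block (maximal connected induced subgraph without cut vertices) is a clique. A star-like block graph is a block graph having a universal vertex (a vertex adjacent to all other vertices). For $S\subseteq V(G)$, the Steiner distance $d(S)$ is the minimum number of edges of a connected subgraph whose vertex set contains $S$, and $SW_k(G)=\sum_{|S|=k} d(S)$. Convention $\binom{m}{l}=0$ for $m<l$. *)

From mathcomp Require Import all_boot.
Set Implicit Arguments. Unset Strict Implicit. Unset Printing Implicit Defensive.

Section Graphs.
Variable T : finType.
Variable e : rel T. (* simple graph: e symmetric and irreflexive (hypotheses) *)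

Definition connected_graph : bool := [forall x, forall y, connect e x y].

Definition restrict (S : {set T}) : rel T :=
  fun x y => [&& x \in S, y \in S & e x y].

Definition connected_in (S : {set T}) : bool :=
  [forall x in S, forall y in S, connect (restrict S) x y].

Definition no_cut_vertex (S : {set T}) : bool :=
  [forall v in S, connected_in (S :\ v)].

Definition is_block (S : {set T}) : bool :=
  [&& S != set0, connected_in S, no_cut_vertex S &
   [forall S' : {set T},
      [&& S \subset S', connected_in S' & no_cut_vertex S'] ==> (S' == S)]].

Definition is_clique (S : {set T}) : bool :=
  [forall x in S, forall y in S, (x != y) ==> e x y].

Definition block_graph : bool :=
  connected_graph && [forall B : {set T}, is_block B ==> is_clique B].

Definition universal_vertex (u : T) : bool := [forall v, (v != u) ==> e u v].

Definition star_like_block_graph : bool :=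
  block_graph && [exists u, universal_vertex u].

(* p = (W, F): a subgraph with vertex set W and edge set F (edges as 2-sets),
   connected, whose vertex set contains S *)
Definition steiner_sub (S : {set T}) (p : {set T} * {set {set T}}) : bool :=
  [&& S \subset p.1,
      [forall f in p.2, exists x, exists y,
          [&& e x y, f == [set x; y], x \in p.1 & y \in p.1]] &
      [forall x in p.1, forall y in p.1,
          connect (fun a b => [set a; b] \in p.2) x y]].

(* Steiner distance d(S): minimum number of edges of such a subgraph.
   The default value #|{set T}| bounds every candidate's edge count. *)
Definition steiner_dist (S : {set T}) : nat :=
  \big[minn/#|{: {set T}}|]_(p : {set T} * {set {set T}} | steiner_sub S p) #|p.2|.

Definition SW (k : nat) : nat :=
  \sum_(S : {set T} | #|S| == k) steiner_dist S.

End Graphs.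

(* Let u be a universal vertex.  Every block contains u, and two blocks meeting
   outside u coincide, so G - u is a disjoint union of the cliques B_i - u.
   A connected subgraph with w vertices has at least w - 1 edges, and a star
   achieves this bound; hence d(S) = |S| - 1 when u is in S or S is a clique,
   and d(S) = |S| otherwise (add u as the centre of a star).  Summing over
   the k-sets, SW_k(G) = (k - 1) C(n, k) + C(n - 1, k) - #{k-cliques avoiding u},
   the k-cliques avoiding u number sum_i C(b_i - 1, k), and
   (k - 1) C(n, k) + C(n - 1, k) = (n - 1) C(n - 1, k - 1). *)
From mathcomp Require Import all_boot zify.
Set Implicit Arguments. Unset Strict Implicit. Unset Printing Implicit Defensive.

Section ConnectedCard.
Variables (T : finType) (F : {set {set T}}) (x0 : T).
Let r : rel T := fun a b => [set a; b] \in F.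

Fixpoint within (n : nat) (v : T) : bool :=
  if n is m.+1 then within m v || [exists w, r v w && within m w] else v == x0.

Definition dist (v : T) : nat := find (within^~ v) (iota 0 #|T|).

Lemma within_path (p : seq T) (v : T) :
  path r v p -> last v p = x0 -> within (size p) v.
Proof.
elim: p v => [|w p IH] v /=; first by move=> _ ->.
case/andP=> rvw pw lp; apply/orP; right; apply/existsP; exists w.
by rewrite rvw IH.
Qed.

Lemma connect_within v : connect r v x0 -> exists2 m, m < #|T| & within m v.
Proof.
case/connectP=> p pv lp; case/shortenP: pv lp => q qv uq _ lq.
exists (size q); last exact: within_path.
by have := max_card (mem (v :: q)); rewrite (card_uniqP uq).
Qed.

Lemma distP m v : m < #|T| -> within m v -> within (dist v) v /\ dist v <= m.
Proof.
move=> ltmT wm.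
have hasm : has (within^~ v) (iota 0 #|T|).
  by apply/hasP; exists m; rewrite ?mem_iota.
have ltdT : dist v < #|T| by rewrite /dist -{2}(size_iota 0 #|T|) -has_find.
split; first by have := nth_find 0 hasm; rewrite -/(dist v) nth_iota.
rewrite leqNgt; apply/negP => ltmd.
by have := before_find 0 ltmd; rewrite nth_iota ?add0n ?wm.
Qed.

Lemma dist_decr v : connect r v x0 -> v != x0 ->
  exists w, r v w && (dist w < dist v).
Proof.
move=> cv vx0; have [m ltmT wm] := connect_within cv.
have [wd ledm] := distP ltmT wm.
have : dist v < #|T| by exact: leq_ltn_trans ledm ltmT.
move: wd; case Ed: (dist v) => [|d] /=; first by rewrite (negbTE vx0).
case/orP=> [wd ltdT|/existsP[w /andP[rvw ww]] ltdT].
  by have := (distP (ltnW ltdT) wd).2; rewrite Ed ltnn.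
by exists w; rewrite rvw ltnS (distP (ltnW ltdT) ww).2.
Qed.

(* Sending each v other than x0 to its first edge on a shortest path to x0
   is injective. *)
Lemma connected_card_le (W : {set T}) :
  x0 \in W -> {in W, forall v, connect r v x0} -> #|W| <= #|F|.+1.
Proof.
move=> Wx0 cW.
pose next v := odflt v [pick w | r v w && (dist w < dist v)].
have nextP v : v \in W :\ x0 -> r v (next v) && (dist (next v) < dist v).
  case/setD1P=> vx0 Wv; rewrite /next; case: pickP => [//|none].
  by have [w] := dist_decr (cW v Wv) vx0; rewrite none.
have inj_edge : {in W :\ x0 &, injective (fun v => [set v; next v])}.
  move=> v1 v2 W1 W2 /= E12; apply/eqP; apply/negPn/negP => n12.
  have /andP[_ lt1] := nextP _ W1; have /andP[_ lt2] := nextP _ W2.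
  have : v1 \in [set v2; next v2] by rewrite -E12 set21.
  have : v2 \in [set v1; next v1] by rewrite E12 set21.
  rewrite !inE (negbTE n12) eq_sym (negbTE n12) /= => /eqP E2 /eqP E1.
  by rewrite -E1 -E2 in lt1 lt2; move: (ltn_trans lt1 lt2); rewrite ltnn.
have sub : [set [set v; next v] | v in W :\ x0] \subset F.
  by apply/subsetP => f /imsetP[v Wv ->]; case/andP: (nextP v Wv).
have := subset_leq_card sub; rewrite (card_in_imset inj_edge).
by rewrite (cardsD1 x0 W) Wx0.
Qed.

End ConnectedCard.

Lemma bigmin_nat_eq (I : finType) (P : pred I) (f : I -> nat) d m :
  m <= d -> (exists2 i, P i & f i = m) -> (forall i, P i -> m <= f i) ->
  \big[minn/d]_(i | P i) f i = m.
Proof.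
move=> lemd [i Pi fim] fge; subst m; apply/eqP; rewrite eqn_leq; apply/andP; split.
  have : i \in index_enum I by rewrite mem_index_enum.
  elim: (index_enum I) => [//|j s IH]; rewrite inE big_cons.
  case/orP=> [/eqP <-|si]; first by rewrite Pi geq_minl.
  by case: (P j); rewrite ?IH // geq_min IH ?orbT.
by apply: (big_ind (leq (f i))) => // x y lex ley; rewrite leq_min lex ley.
Qed.

Lemma sum_nat_bool (I : finType) (P Q : pred I) :
  \sum_(i | P i) (Q i : nat) = #|[set i | P i && Q i]|.
Proof. by rewrite -sum1dep_card big_mkcondr; apply: eq_bigr => i _; case: (Q i). Qed.

Lemma binom_sum_identity n k : 2 <= k <= n ->
  (k - 1) * 'C(n, k) + 'C(n - 1, k) = (n - 1) * 'C(n - 1, k - 1).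
Proof.
case: n => [|n]; first by case: k => [|[|k]].
case: k => [|[|k]] //= _; rewrite !subn1 /=.
by have := binS n k.+1; have := mul_bin_diag n.+1 k.+1 => /=; nia.
Qed.

Section SimpleGraph.
Variables (T : finType) (e : rel T).
Hypotheses (e_sym : symmetric e) (e_irr : irreflexive e).

Definition biconnected (S : {set T}) : bool := connected_in e S && no_cut_vertex e S.

Lemma clique_edge (S : {set T}) a b :
  is_clique e S -> a \in S -> b \in S -> a != b -> e a b.
Proof. by move=> /forall_inP cS Sa Sb; move/forall_inP: (cS a Sa) => /(_ b Sb)/implyP. Qed.

Lemma clique_subset (A B : {set T}) : A \subset B -> is_clique e B -> is_clique e A.
Proof.
move=> /subsetP AB cB; apply/forall_inP => a Aa; apply/forall_inP => b Ab.
by apply/implyP; apply: (clique_edge cB); apply: AB.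
Qed.

Lemma connected_in_star (S : {set T}) c :
  c \in S -> (forall a, a \in S -> a != c -> e c a) -> connected_in e S.
Proof.
move=> Sc adj; apply/forall_inP => a Sa; apply/forall_inP => b Sb.
apply: (@connect_trans _ _ c).
  case: (eqVneq a c) => [->|ac]; first exact: connect0.
  by apply: connect1; rewrite /restrict Sa Sc e_sym adj.
case: (eqVneq b c) => [->|bc]; first exact: connect0.
by apply: connect1; rewrite /restrict Sb Sc adj.
Qed.

Lemma connected_in_clique (S : {set T}) : is_clique e S -> connected_in e S.
Proof.
move=> cS; apply/forall_inP => a Sa; apply/forall_inP => b Sb.
case: (eqVneq a b) => [->|ab]; first exact: connect0.
by apply: connect1; rewrite /restrict Sa Sb (clique_edge cS).
Qed.

Lemma biconnected_sub_block (X : {set T}) :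
  X != set0 -> biconnected X -> exists2 B, is_block e B & X \subset B.
Proof.
move=> X0 bX; have bXX : biconnected X && (X \subset X) by rewrite bX subxx.
case: (@arg_maxnP _ X (fun B => biconnected B && (X \subset B)) (fun B => #|B|) bXX)
  => B /andP[bB XB] Bmax.
exists B => //; case/andP: bB => cB nB; apply/and4P; split => //.
  by case/set0Pn: X0 => x Xx; apply/set0Pn; exists x; apply: (subsetP XB).
apply/forallP => S; apply/implyP => /and3P[BS cS nS].
rewrite eq_sym eqEcard BS; apply: Bmax.
by rewrite /biconnected cS nS (subset_trans XB BS).
Qed.

Lemma block_maximal (B S : {set T}) :
  is_block e B -> B \subset S -> biconnected S -> S = B.
Proof.
case/and4P=> _ _ _ /forallP Bmax BS /andP[cS nS].
by apply/eqP; move/implyP: (Bmax S); apply; rewrite BS cS nS.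
Qed.

Lemma steiner_edgeP (S : {set T}) p a b : steiner_sub e S p -> [set a; b] \in p.2 ->
  [/\ a \in p.1, b \in p.1 & e a b].
Proof.
case/and3P=> _ /forall_inP edges _ ab.
case/existsP: (edges _ ab) => x /existsP[y /and4P[exy /eqP Eab x1 y1]].
have xy : x != y by apply: contraTneq exy => ->; rewrite e_irr.
have : a \in [set x; y] by rewrite -Eab set21.
have : b \in [set x; y] by rewrite -Eab set22.
have : x \in [set a; b] by rewrite Eab set21.
have : y \in [set a; b] by rewrite Eab set22.
rewrite !inE => ya xb /orP[] /eqP Eb /orP[] /eqP Ea; subst a b.
- by rewrite orbb eq_sym (negbTE xy) in ya.
- by rewrite e_sym.
- by [].
- by rewrite orbb (negbTE xy) in xb.
Qed.

Lemma steiner_card_le (S : {set T}) p :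
  steiner_sub e S p -> S != set0 -> #|p.1| <= #|p.2|.+1.
Proof.
case/and3P=> SW _ /forall_inP conn /set0Pn[x Sx]; have Wx := subsetP SW _ Sx.
by apply: (@connected_card_le _ _ x) => // v Wv; move/forall_inP: (conn v Wv); apply.
Qed.

Definition star (W : {set T}) c : {set {set T}} := [set [set c; a] | a in W :\ c].

Lemma steiner_sub_star (S W : {set T}) c : S \subset W -> c \in W ->
  (forall a, a \in W -> a != c -> e c a) -> steiner_sub e S (W, star W c).
Proof.
move=> SW Wc adj; apply/and3P; split => //=.
  apply/forall_inP => f /imsetP[a /setD1P[ac Wa] ->].
  by apply/existsP; exists c; apply/existsP; exists a; rewrite adj ?eqxx ?Wc ?Wa.
have from_c a : a \in W -> connect (fun a b => [set a; b] \in star W c) c a.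
  case: (eqVneq a c) => [-> _|ac Wa]; first exact: connect0.
  by apply: connect1; apply/imsetP; exists a; rewrite ?inE ?ac ?Wa.
apply/forall_inP => a Wa; apply/forall_inP => b Wb.
apply: (@connect_trans _ _ c); last exact: from_c.
case: (eqVneq a c) => [->|ac]; first exact: connect0.
by apply: connect1; rewrite setUC; apply/imsetP; exists a; rewrite ?inE ?ac ?Wa.
Qed.

Lemma card_star (W : {set T}) c : c \in W -> #|star W c| = #|W| - 1.
Proof.
move=> Wc; rewrite card_in_imset; first by rewrite (cardsD1 c W) Wc add1n subn1.
move=> a1 a2 /setD1P[a1c _] _ E.
have : a1 \in [set c; a2] by rewrite -E set22.
by rewrite !inE (negbTE a1c) => /eqP.
Qed.

End SimpleGraph.

Section StarLikeBlockGraph.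
Variables (T : finType) (e : rel T).
Hypotheses (e_sym : symmetric e) (e_irr : irreflexive e).
Variable u : T.
Hypothesis u_univ : forall v, v != u -> e u v.
Hypothesis block_clique : forall B, is_block e B -> is_clique e B.

Lemma biconnected_cone (S : {set T}) :
  u \in S -> is_clique e (S :\ u) -> biconnected e S.
Proof.
move=> Su cS; apply/andP; split.
  by apply: (connected_in_star e_sym Su) => a _; apply: u_univ.
apply/forall_inP => v Sv; case: (eqVneq v u) => [->|vu].
  exact: connected_in_clique.
apply: (connected_in_star e_sym (c:=u)) => [|a _]; first by rewrite !inE eq_sym vu.
exact: u_univ.
Qed.

(* The set {u, x, y, z} is biconnected, so it lies in a block, which is a clique. *)
Lemma edge_trans_off_u x y z : x != u -> y != u -> z != u -> x != z ->
  e x y -> e y z -> e x z.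
Proof.
move=> xu yu zu xz exy eyz; pose X := [set u; x; y; z].
have Xu : u \in X by rewrite !inE eqxx.
have Xx : x \in X by rewrite !inE eqxx orbT.
have Xz : z \in X by rewrite !inE eqxx !orbT.
have bX : biconnected e X.
  apply/andP; split; first by apply: (connected_in_star e_sym Xu) => a _; apply: u_univ.
  apply/forall_inP => v Xv; case: (eqVneq v u) => [->|vu].
    apply: (connected_in_star e_sym (c:=y)); first by rewrite !inE yu !eqxx !orbT.
    move=> a; rewrite !inE => /andP[/negbTE -> /=].
    by case/orP=> [/orP[]|] /eqP -> ya //; [rewrite e_sym | rewrite eqxx in ya].
  apply: (connected_in_star e_sym (c:=u)) => [|a _]; first by rewrite !inE eq_sym vu eqxx.
  exact: u_univ.
have [|B /block_clique cB XB] := biconnected_sub_block _ bX; first by apply/set0Pn; exists u.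
by apply: (clique_edge cB) => //; apply: (subsetP XB).
Qed.

Lemma block_has_u (B : {set T}) : is_block e B -> u \in B.
Proof.
move=> bB; have cone : biconnected e (u |: B).
  apply: biconnected_cone; first by rewrite !inE eqxx.
  apply: (clique_subset _ (block_clique bB)).
  by apply/subsetP => a; rewrite !inE => /andP[/negbTE ->].
by rewrite -(block_maximal bB (subsetUr _ _) cone) setU11.
Qed.

Lemma blocks_common_edge (B1 B2 : {set T}) x a b :
  is_block e B1 -> is_block e B2 -> x \in B1 -> x \in B2 -> x != u ->
  a \in B1 -> b \in B2 -> a != u -> b != u -> a != b -> e a b.
Proof.
move=> /block_clique c1 /block_clique c2 x1 x2 xu a1 b2 au bu ab.
case: (eqVneq a x) => [ax|ax]; first by apply: (clique_edge c2); rewrite // ax.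
case: (eqVneq b x) => [bx|bx]; first by apply: (clique_edge c1); rewrite // bx.
apply: (@edge_trans_off_u a x b) => //; first exact: (clique_edge c1).
by apply: (clique_edge c2); rewrite // eq_sym.
Qed.

Lemma blocks_eq (B1 B2 : {set T}) x : is_block e B1 -> is_block e B2 ->
  x \in B1 -> x \in B2 -> x != u -> B1 = B2.
Proof.
move=> b1 b2 x1 x2 xu.
have cone : biconnected e (B1 :|: B2).
  apply: biconnected_cone; first by rewrite inE (block_has_u b1).
  apply/forall_inP => a; rewrite !inE => /andP[au Ba].
  apply/forall_inP => b; rewrite !inE => /andP[bu Bb]; apply/implyP => ab.
  case/orP: Ba => Ba; case/orP: Bb => Bb.
  - exact: (clique_edge (block_clique b1)).
  - exact: (blocks_common_edge b1 b2 x1 x2).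
  - by rewrite e_sym (blocks_common_edge b1 b2 x1 x2) // eq_sym.
  - exact: (clique_edge (block_clique b2)).
by rewrite -[LHS](block_maximal b1 (subsetUl _ _) cone) (block_maximal b2 (subsetUr _ _) cone).
Qed.

Lemma clique_sub_block (S : {set T}) : S != set0 -> u \notin S -> is_clique e S ->
  exists2 B, is_block e B & S \subset B :\ u.
Proof.
move=> S0 Su cS; have cone : biconnected e (u |: S).
  by apply: biconnected_cone; rewrite ?setU11 // setU1K.
have [|B bB uSB] := biconnected_sub_block _ cone.
  by apply/set0Pn; exists u; rewrite setU11.
exists B => //; apply/subsetP => a Sa; rewrite !inE (subsetP uSB) ?inE ?Sa ?orbT //.
by rewrite andbT; apply: contraNneq Su => <-.
Qed.

(* Without u, an edge path can only move inside a single clique of G - u. *)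
Lemma steiner_avoiding_u (S : {set T}) p :
  steiner_sub e S p -> u \notin p.1 -> is_clique e S.
Proof.
move=> st Wu; case/and3P: (st) => SW _ /forall_inP conn.
have notu z : z \in p.1 -> z != u by move=> Wz; apply: contraNneq Wu => <-.
apply/forall_inP => x Sx; apply/forall_inP => y Sy; apply/implyP => xy.
have Wx := subsetP SW _ Sx; have Wy := subsetP SW _ Sy.
pose Q := [pred z | (z == x) || e x z].
have QP z z' : [set z; z'] \in p.2 -> z \in Q -> z' \in Q.
  case/(steiner_edgeP e_sym e_irr st) => Wz Wz' ezz'; rewrite !inE.
  case/orP=> [/eqP <-|exz]; first by rewrite ezz' orbT.
  case: (eqVneq z' x) => [//|z'x] /=.
  by apply: (@edge_trans_off_u x z z'); rewrite ?notu // eq_sym.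
have Qclosed : closed (fun a b => [set a; b] \in p.2) Q.
  by move=> z z' zz'; apply/idP/idP; apply: QP; rewrite // setUC.
move/forall_inP: (conn x Wx) => /(_ y Wy) /(closed_connect Qclosed).
by rewrite !inE eqxx eq_sym (negbTE xy).
Qed.

Lemma steiner_distE (S : {set T}) : S != set0 ->
  steiner_dist e S = if (u \in S) || is_clique e S then #|S| - 1 else #|S|.
Proof.
move=> S0; rewrite /steiner_dist; apply: bigmin_nat_eq.
- have leTsets : #|T| <= #|{: {set T}}| by apply: (leq_card (@set1 T)); apply: set1_inj.
  by apply: leq_trans leTsets; case: ifP => _; rewrite ?(leq_trans (leq_subr _ _)) ?max_card.
- case Su: (u \in S) => /=.
    exists (S, star S u); last by rewrite /= card_star.
    by apply: steiner_sub_star => // a _; apply: u_univ.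
  case cS: (is_clique e S).
    case/set0Pn: S0 => x Sx; exists (S, star S x); last by rewrite /= card_star.
    by apply: steiner_sub_star => // a Sa ax; apply: (clique_edge cS); rewrite // eq_sym.
  exists (u |: S, star (u |: S) u).
    by apply: steiner_sub_star; rewrite ?subsetUr ?setU11 // => a _; apply: u_univ.
  by rewrite /= card_star ?setU11 // cardsU1 Su /= add1n subn1.
- move=> p st; have le1 := steiner_card_le st S0.
  have leS : #|S| <= #|p.1| by apply: subset_leq_card; case/and3P: st.
  case: ifP => [_|/negbT]; first by rewrite leq_subLR (leq_trans leS).
  rewrite negb_or => /andP[/negbTE Su ncS].
  have Wu : u \in p.1 by apply: contraNT ncS; apply: steiner_avoiding_u.
  have : #|u |: S| <= #|p.1|.
    by apply: subset_leq_card; rewrite subUset sub1set Wu; case/and3P: st.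
  by rewrite cardsU1 Su => /leq_trans/(_ le1).
Qed.

Lemma steiner_dist_add_clique (S : {set T}) : S != set0 ->
  steiner_dist e S + ((u \notin S) && is_clique e S) = (#|S| - 1) + (u \notin S).
Proof.
move=> S0; have := S0; rewrite -card_gt0 => Spos.
by rewrite steiner_distE //; case: (u \in S); case: (is_clique e S) => /=; lia.
Qed.

Lemma sum_blocks_containing (S : {set T}) : S != set0 ->
  \sum_(B | is_block e B) (S \subset B :\ u : nat) = ((u \notin S) && is_clique e S : nat).
Proof.
move=> S0; case: andP => [[Su cS]|notcS].
  have [B0 bB0 SB0] := clique_sub_block S0 Su cS.
  rewrite (bigD1 B0) //= SB0 big1 // => B /andP[bB BB0].
  case SB: (S \subset B :\ u) => //; case/set0Pn: S0 => x Sx.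
  move: (subsetP SB x Sx) (subsetP SB0 x Sx); rewrite !inE => /andP[xu xB] /andP[_ xB0].
  by rewrite (blocks_eq bB bB0 xB xB0 xu) eqxx in BB0.
apply: big1 => B bB; case SB: (S \subset B :\ u) => //; case: notcS; split.
  by apply/negP => Su; move: (subsetP SB u Su); rewrite !inE eqxx.
by apply: clique_subset (block_clique bB); apply: subset_trans SB (subD1set _ _).
Qed.

(* Both sides count the pairs (B, S) with S a k-subset of B minus u. *)
Lemma sum_blocks_binomial k : 0 < k ->
  \sum_(B | is_block e B) 'C(#|B| - 1, k)
  = \sum_(S : {set T} | #|S| == k) ((u \notin S) && is_clique e S : nat).
Proof.
move=> kpos.
have S0 (S : {set T}) : #|S| == k -> S != set0.
  by move/eqP=> cardS; rewrite -card_gt0 cardS.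
rewrite -(eq_bigr _ (fun S kS => sum_blocks_containing (S0 S kS))) exchange_big /=.
apply: eq_bigr => B bB; rewrite sum_nat_bool (cardsD1 u B) block_has_u // add1n subn1 /=.
by rewrite -cards_draws; apply: eq_card => S; rewrite !inE andbC.
Qed.

Lemma SW_add_cliques k : 0 < k ->
  SW e k + \sum_(S : {set T} | #|S| == k) ((u \notin S) && is_clique e S : nat)
  = (k - 1) * 'C(#|T|, k) + 'C(#|T| - 1, k).
Proof.
move=> kpos; rewrite /SW -big_split /=.
transitivity (\sum_(S : {set T} | #|S| == k) ((k - 1) + (u \notin S : nat))).
  apply: eq_bigr => S /eqP cardS.
  by rewrite steiner_dist_add_clique ?cardS // -card_gt0 cardS.
rewrite big_split sum_nat_const mulnC -card_draws sum_nat_bool.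
congr (_ * _ + _); first by apply: eq_card => S; rewrite inE.
rewrite subn1 -(cardsC1 u) -cards_draws; apply: eq_card => S; rewrite !inE andbC.
by rewrite subsetC sub1set inE.
Qed.

End StarLikeBlockGraph.

Theorem mainTheorem6 (T : finType) (e : rel T) (k : nat) :
  symmetric e -> irreflexive e ->
  star_like_block_graph e ->
  2 <= k <= #|T| ->
  SW e k = (#|T| - 1) * 'C(#|T| - 1, k - 1)
           - \sum_(B : {set T} | is_block e B) 'C(#|B| - 1, k).
Proof.
move=> e_sym e_irr /andP[/andP[_ /forallP blocks] /existsP[u /forallP univ]] k_range.
have u_univ v : v != u -> e u v by apply/implyP.
have block_clique B : is_block e B -> is_clique e B by apply/implyP.
have kpos : 0 < k by case/andP: k_range => /ltnW.
rewrite -(binom_sum_identity k_range) -(SW_add_cliques e_sym e_irr u_univ block_clique kpos).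
by rewrite (sum_blocks_binomial e_sym u_univ block_clique kpos) addnK.
Qed.
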